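(* Let $H=(U,F)$ be a $d$-regular graph on $n$ vertices and let $k$ be an integer with $1 \le k \le d$. Let $G'$ be obtained from $H$ by subdividing every edge of $H$ once (replacing each edge $\{u,w\}$ by a new vertex $x_{uw}$ and edges $\{u,x_{uw}\},\{x_{uw},w\}$). Choose $\theta_i,\phi$ so that every original vertex $u\in U$ is accepting and every subdivision vertex is rejecting, and set $q=1$ and $p = d - (k-1)/2 + \varepsilon$ with $0<\varepsilon<1/n^2$. Then $H$ contains a clique on $k$ vertices if and only if there is a seed set $S$ in $G'$ with $|S| \le k$ and $\pi(S) > 0$.
   Context: Basic model on a finite undirected graph $G$: each agent $i$ has $\theta_i\in[0,1]$, the product has $\phi\in[0,1]$; agent $i$ is accepting if $\theta_i \le \phi$ and rejecting otherwise. A seed set is a set $S$ of accepting agents. $V(S)$ is the set of agents $i$ for which there exist $j \in S$ and a path in $G$ from $i$ to $j$ all of whose internal vertices are accepting (paths of length $0$ allowed). $V^+(S)$ and $V^-(S)$ are the accepting and rejecting agents in $V(S)$, and $\pi(S) = p\,|V^+(S)| - q\,|V^-(S)|$. *)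

From HB Require Import structures.
From mathcomp Require Import all_boot all_order all_algebra.
Set Implicit Arguments. Unset Strict Implicit. Unset Printing Implicit Defensive.
Import Order.TTheory GRing.Theory Num.Theory.
Local Open Scope ring_scope.

Section Model.
Variables (R : realFieldType) (V : finType) (g : rel V).
Variables (theta : V -> R) (phi : R).

Definition accepting (i : V) : bool := theta i <= phi.

(* Since seeds are accepting,
   for j in a seed set this is exactly "all internal vertices accepting". *)
Definition reach_to (i j : V) : bool :=
  connect (fun x y => g x y && accepting y) i j.

Definition seed_set (S : {set V}) : bool := [forall j in S, accepting j].

Definition Vof (S : {set V}) : {set V} :=
  [set i | [exists j in S, reach_to i j]].
Definition Vplus (S : {set V}) : {set V} := [set i in Vof S | accepting i].
Definition Vminus (S : {set V}) : {set V} := [set i in Vof S | ~~ accepting i].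

Definition payoff (p q : R) (S : {set V}) : R :=
  p * (#|Vplus S|)%:R - q * (#|Vminus S|)%:R.
End Model.

Definition simple_graph (U : finType) (e : rel U) : Prop :=
  symmetric e /\ irreflexive e.
Definition regular (U : finType) (e : rel U) (d : nat) : Prop :=
  forall u : U, #|[set w | e u w]| = d.
Definition has_clique (U : finType) (e : rel U) (k : nat) : Prop :=
  exists K : {set U}, #|K| = k /\
    (forall u w, u \in K -> w \in K -> u != w -> e u w).

(* One subdivision vertex per (unordered) edge {u,w}: represented by the
   ordered pair with enum_rank u < enum_rank w. *)
Definition sedge (U : finType) (e : rel U) :=
  {pw : U * U | e pw.1 pw.2 && (enum_rank pw.1 < enum_rank pw.2)%N}.

Definition subdiv_vertex (U : finType) (e : rel U) : finType :=
  (U + sedge e)%type.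

Definition subdiv_rel (U : finType) (e : rel U) : rel (subdiv_vertex e) :=
  fun a b =>
    match a, b with
    | inl u, inr x => (u == (val x).1) || (u == (val x).2)
    | inr x, inl u => (u == (val x).1) || (u == (val x).2)
    | _, _ => false
    end.
Arguments subdiv_rel [U] e _ _.

(* In the subdivided graph a path from a seed can leave an original vertex only
   towards a subdivision vertex, which is rejecting and therefore ends it.  Hence
   a seed set S consists of original vertices, V+(S) = S, and V-(S) is the set of
   edges of H meeting S; by d-regularity there are |S| d - b of them, where b is
   the number of edges inside S.  So pi(S) = |S| (eps - (k-1)/2) + b.  As
   b <= |S|(|S|-1)/2 and 2 k eps < 1, for |S| <= k this is positive exactly when
   |S| = k and S spans a clique. *)

From HB Require Import structures.
From mathcomp Require Import all_boot all_order all_algebra.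
From mathcomp Require Import zify ring lra.
Import Order.TTheory GRing.Theory Num.Theory.

Set Implicit Arguments.
Unset Strict Implicit.
Unset Printing Implicit Defensive.

Lemma card_set_sum (T : finType) (P : pred T) :
  #|[set x | P x]| = \sum_x (P x : nat).
Proof. by rewrite -sum1dep_card big_mkcond; apply: eq_bigr => x _; case: (P x). Qed.

Lemma card_offdiag (T : finType) (S : {set T}) :
  #|[set p : T * T | [&& p.1 \in S, p.2 \in S & p.1 != p.2]]| + #|S| = #|S| * #|S|.
Proof.
rewrite -cardsX -(cardsID [set p : T * T | p.1 == p.2] (setX S S)) addnC; congr (_ + _).
  have -> : setX S S :&: [set p : T * T | p.1 == p.2] = (fun u => (u, u)) @: S.
    apply/setP => -[u w]; rewrite !inE /=; apply/idP/imsetP.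
      by case/andP => /andP [uS _] /eqP <-; exists u.
    by case=> v vS [-> ->]; rewrite vS eqxx.
  by rewrite card_imset // => u v [].
by apply: eq_card => -[u w]; rewrite !inE /= [RHS]andbC -andbA.
Qed.

Lemma regular_lt_card (U : finType) (e : rel U) (d : nat) (u : U) :
  irreflexive e -> regular e d -> d < #|U|.
Proof.
move=> e_irr e_reg; rewrite -(e_reg u) -cardsT; apply: proper_card.
by rewrite properT; apply/eqP => /setP/(_ u); rewrite !inE e_irr.
Qed.

Section SubdividedEdges.
Variables (U : finType) (e : rel U).
Hypothesis e_simple : simple_graph e.

Lemma sum_sedge (F : U * U -> nat) :
  \sum_(p | e p.1 p.2 && (enum_rank p.1 < enum_rank p.2)%N) F p =
  \sum_(x : sedge e) F (val x).
Proof.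
rewrite (reindex_omap (val : sedge e -> U * U) insub) => [|p Pp]; last first.
  by rewrite insubT.
by apply: eq_bigl => -[p Pp] /=; rewrite insubT /= Pp eqxx.
Qed.

Lemma sum_darts (F : U -> U -> nat) :
  \sum_(p : U * U | e p.1 p.2) F p.1 p.2 =
  \sum_(x : sedge e) (F (val x).1 (val x).2 + F (val x).2 (val x).1).
Proof.
have [e_sym e_irr] := e_simple.
rewrite big_split /= -(sum_sedge (fun p => F p.1 p.2)) -(sum_sedge (fun p => F p.2 p.1)).
rewrite (bigID (fun p => enum_rank p.1 < enum_rank p.2)%N) /=; congr (_ + _).
have swapK : involutive (fun p : U * U => (p.2, p.1)) by case.
rewrite (reindex_inj (inv_inj swapK)) /=; apply: eq_bigl => -[u w] /=.
rewrite (e_sym w u); case euw: (e u w) => //=.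
have : enum_rank u != enum_rank w :> nat.
  rewrite (inj_eq val_inj) (inj_eq enum_rank_inj).
  by apply: contraTneq euw => ->; rewrite e_irr.
by rewrite -leqNgt ltn_neqAle => ->.
Qed.

Definition touching (S : {set U}) : {set sedge e} :=
  [set x | ((val x).1 \in S) || ((val x).2 \in S)].
Definition inside (S : {set U}) : {set sedge e} :=
  [set x | ((val x).1 \in S) && ((val x).2 \in S)].

Lemma card_touching_inside d (e_reg : regular e d) (S : {set U}) :
  #|touching S| + #|inside S| = #|S| * d.
Proof.
have deg_sum : \sum_(p : U * U | e p.1 p.2) (p.1 \in S : nat) = #|S| * d.
  rewrite -(pair_big_dep xpredT e (fun u _ => (u \in S : nat))) /=.
  rewrite -sum_nat_const [RHS]big_mkcond /=; apply: eq_bigr => u _.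
  case: (u \in S); last by rewrite big1.
  by rewrite -(e_reg u) card_set_sum big_mkcond.
rewrite -deg_sum (sum_darts (fun u _ => (u \in S : nat))).
rewrite /touching /inside !card_set_sum -big_split /=.
by apply: eq_bigr => x _; case: ((val x).1 \in S); case: ((val x).2 \in S).
Qed.

Definition inner_darts (S : {set U}) : {set U * U} :=
  [set p | [&& e p.1 p.2, p.1 \in S & p.2 \in S]].

Lemma card_inner_darts (S : {set U}) : #|inner_darts S| = 2 * #|inside S|.
Proof.
rewrite card_set_sum.
transitivity (\sum_(p : U * U | e p.1 p.2) ((p.1 \in S) && (p.2 \in S) : nat)).
  by rewrite [RHS]big_mkcond; apply: eq_bigr => p _; case: (e p.1 p.2).
rewrite (sum_darts (fun u w => ((u \in S) && (w \in S) : nat))).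
rewrite /inside card_set_sum big_distrr.
by apply: eq_bigr => x _; case: ((val x).1 \in S); case: ((val x).2 \in S).
Qed.

Lemma inner_darts_offdiag (S : {set U}) :
  inner_darts S \subset [set p | [&& p.1 \in S, p.2 \in S & p.1 != p.2]].
Proof.
apply/subsetP => -[u w]; rewrite !inE /= => /and3P [euw -> ->] /=.
by apply: contraTneq euw => ->; case: e_simple => _ ->.
Qed.

Lemma card_inside_le (S : {set U}) : 2 * #|inside S| + #|S| <= #|S| * #|S|.
Proof.
by rewrite -card_inner_darts -card_offdiag leq_add2r subset_leq_card ?inner_darts_offdiag.
Qed.

Lemma card_inside_clique (S : {set U}) :
  2 * #|inside S| + #|S| = #|S| * #|S| <->
  (forall u w, u \in S -> w \in S -> u != w -> e u w).
Proof.
rewrite -card_inner_darts -card_offdiag; split.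
  move=> /addIn card_eq u w uS wS uw.
  have /eqP darts_eq : inner_darts S == [set p | [&& p.1 \in S, p.2 \in S & p.1 != p.2]].
    by rewrite eqEcard inner_darts_offdiag card_eq leqnn.
  have : (u, w) \in inner_darts S by rewrite darts_eq inE /= uS wS uw.
  by rewrite inE /= => /andP [].
move=> S_clique; congr (_ + _); apply: eq_card => -[u w]; rewrite !inE /=.
case uS: (u \in S); case wS: (w \in S); rewrite ?andbF //= andbT.
by have [->|uw] := eqVneq u w; [case: e_simple => _ -> | rewrite S_clique].
Qed.

End SubdividedEdges.

Section SeedsInSubdivision.
Local Open Scope ring_scope.
Variables (R : realFieldType) (U : finType) (e : rel U).
Variables (theta : subdiv_vertex e -> R) (phi : R).
Hypothesis orig_accepting : forall u : U, accepting theta phi (inl u).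
Hypothesis subdiv_rejecting : forall x : sedge e, ~~ accepting theta phi (inr x).

Local Notation G := (subdiv_rel e).

Lemma reach_to_subdiv i j :
  reach_to G theta phi i j = (i == j) || G i j && accepting theta phi j.
Proof.
apply/idP/idP; last first.
  case/orP => [/eqP -> | Gij]; [exact: connect0 | exact: connect1].
move/connectP => [[|y p] /= Gp ->]; first by rewrite eqxx.
case/andP: Gp => /andP [Giy acc_y]; case: y Giy acc_y => [v|x] Giy acc_y Gp.
  case: p Gp => [|[w|x] p] /=; first by rewrite Giy acc_y orbT.
    by case: i Giy.
  by rewrite (negbTE (subdiv_rejecting x)) andbF.
by rewrite (negbTE (subdiv_rejecting x)) in acc_y.
Qed.

Lemma reach_to_inl i (v : U) :
  reach_to G theta phi i (inl v) = (i == inl v) || G i (inl v).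
Proof. by rewrite reach_to_subdiv orig_accepting andbT. Qed.

Definition orig (S : {set subdiv_vertex e}) : {set U} := [set u | inl u \in S].

Lemma orig_imset (K : {set U}) : orig (inl @: K) = K.
Proof. by apply/setP => u; rewrite inE mem_imset //; exact: inl_inj. Qed.

Lemma inl_in_inr_imset (A : {set sedge e}) (u : U) : (inl u \in inr @: A) = false.
Proof. by apply/imsetP => -[]. Qed.

Variable S : {set subdiv_vertex e}.
Hypothesis S_seed : seed_set theta phi S.

Lemma seed_inr (x : sedge e) : (inr x \in S) = false.
Proof.
apply/negbTE/negP => xS.
by move: (implyP (forallP S_seed (inr x)) xS); rewrite (negbTE (subdiv_rejecting x)).
Qed.

Lemma seed_imset_orig : S = inl @: orig S.
Proof.
apply/setP => -[u|x]; first by rewrite mem_imset ?inE //; exact: inl_inj.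
by rewrite seed_inr; apply/esym/imsetP => -[].
Qed.

Lemma card_seed : #|S| = #|orig S|.
Proof. by rewrite {1}seed_imset_orig card_imset //; exact: inl_inj. Qed.

Lemma Vof_seed : Vof G theta phi S = S :|: inr @: touching e (orig S).
Proof.
apply/setP => i; rewrite inE [in LHS]seed_imset_orig inE.
apply/existsP/idP => [[_ /andP [/imsetP [v vS ->]]] | ].
  rewrite reach_to_inl inE in vS *; case: i => [u|x] /=.
    by rewrite orbF => /eqP [->]; rewrite vS.
  rewrite seed_inr mem_imset; last exact: inr_inj.
  by rewrite !inE => /orP [] /eqP <-; rewrite vS ?orbT.
case/orP => [iS | /imsetP [x xT ->]].
  by exists i; rewrite -seed_imset_orig iS reach_to_subdiv eqxx.
rewrite inE in xT; case/orP: xT => xS;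
  [exists (inl (val x).1) | exists (inl (val x).2)];
  by rewrite (mem_imset _ _ inl_inj) xS reach_to_inl /= eqxx ?orbT.
Qed.

Lemma Vplus_seed : Vplus G theta phi S = S.
Proof.
apply/setP => i; rewrite inE Vof_seed !inE.
case: i => [u|x]; first by rewrite orig_accepting inl_in_inr_imset orbF andbT.
by rewrite seed_inr (negbTE (subdiv_rejecting x)) andbF.
Qed.

Lemma Vminus_seed : Vminus G theta phi S = inr @: touching e (orig S).
Proof.
apply/setP => i; rewrite inE Vof_seed !inE.
case: i => [u|x]; first by rewrite orig_accepting inl_in_inr_imset andbF.
by rewrite seed_inr subdiv_rejecting andbT.
Qed.

Lemma payoff_seed (d : nat) (p : R) : simple_graph e -> regular e d ->
  payoff G theta phi p 1 S = #|orig S|%:R * (p - d%:R) + #|inside e (orig S)|%:R.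
Proof.
move=> e_simple e_reg.
have := card_touching_inside e_simple e_reg (orig S).
move/(congr1 (fun n => n%:R : R)); rewrite natrD natrM => card_sum.
rewrite /payoff Vplus_seed Vminus_seed card_imset; last exact: inr_inj.
by rewrite card_seed -[#|touching _ _|%:R](addrK #|inside e (orig S)|%:R) card_sum; ring.
Qed.

End SeedsInSubdivision.

Section Arithmetic.
Local Open Scope ring_scope.
Variable R : realFieldType.

Lemma eps_small (n k : nat) (eps : R) :
  (k < n)%N -> 0 < eps -> eps < 1 / (n ^ 2)%:R -> 2 * k%:R * eps < 1.
Proof.
move=> kn eps_gt0; rewrite ltr_pdivlMr ?ltr0n ?expn_gt0 ?(leq_ltn_trans _ kn) //.
have : (2 * k)%:R <= (n ^ 2)%:R :> R by rewrite ler_nat; nia.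
rewrite natrM; nra.
Qed.

Lemma seed_value_gt0 (s k b : nat) (eps : R) :
  (0 < k)%N -> (s <= k)%N -> (2 * b + s <= s * s)%N -> 0 < eps -> 2 * k%:R * eps < 1 ->
  0 < s%:R * (eps - (k%:R - 1) / 2) + b%:R <-> s = k /\ (2 * b + s = s * s)%N.
Proof.
move=> k_gt0 sk bs eps_gt0 k_eps.
have nat_le m n : (m <= n)%N -> m%:R <= n%:R :> R by rewrite ler_nat.
have k_ge1 : 1 <= k%:R :> R by rewrite ler1n.
have eps_lt_half : 2 * eps < 1.
  have : 0 <= eps * (k%:R - 1) by apply: mulr_ge0; lra.
  nra.
rewrite -(pmulr_rgt0 _ (ltr0n R 2)).
have -> : 2%:R * (s%:R * (eps - (k%:R - 1) / 2) + b%:R) =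
          s%:R * (2 * eps + 1 - k%:R) + 2 * b%:R :> R by field.
split; last first.
  case=> -> /(congr1 (fun n => n%:R : R)); rewrite natrD !natrM => bk.
  have : 0 < k%:R * eps :> R by rewrite mulr_gt0 ?ltr0n.
  nra.
have := nat_le _ _ bs; rewrite natrD !natrM => bs_R pos.
have s_eq_k : s = k.
  apply/eqP; rewrite eqn_leq sk leqNgt; apply/negP.
  move=> /nat_le; rewrite -addn1 natrD => sk_R.
  have : 0 <= s%:R * (k%:R - s%:R - 1) :> R by rewrite mulr_ge0 //; lra.
  have : 0 <= s%:R * (1 - 2 * eps) :> R by rewrite mulr_ge0 //; lra.
  nra.
subst s; split=> //; apply/eqP; rewrite eqn_leq bs leqNgt; apply/negP.
by move=> /nat_le; rewrite -addn1 !natrD !natrM; nra.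
Qed.

End Arithmetic.

Local Open Scope ring_scope.

Theorem mainTheorem9 (R : realFieldType) (U : finType) (e : rel U) (d k : nat)
  (theta : subdiv_vertex e -> R) (phi eps : R) :
  simple_graph e -> regular e d ->
  (1 <= k)%N -> (k <= d)%N ->
  (forall i, 0 <= theta i <= 1) -> 0 <= phi <= 1 ->
  (forall u : U, accepting theta phi (inl u)) ->
  (forall x : sedge e, ~~ accepting theta phi (inr x)) ->
  0 < eps -> eps < 1 / ((#|U| ^ 2)%N)%:R ->
  (has_clique e k <->
   exists S : {set subdiv_vertex e},
     [/\ seed_set theta phi S, (#|S| <= k)%N &
         0 < payoff (subdiv_rel e) theta phi
               (d%:R - (k%:R - 1) / 2 + eps) 1 S]).
Proof.
move=> e_simple e_reg k_gt0 k_le_d _ _ orig_acc subdiv_rej eps_gt0 eps_lt.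
have [u _] : exists u : U, u \in U.
  apply/card_gt0P; rewrite lt0n; apply: contraTneq eps_lt => ->.
  by rewrite exp0n // div1r invr0 -leNgt ltW.
have k_lt_n := leq_ltn_trans k_le_d (regular_lt_card u e_simple.2 e_reg).
have k_eps := eps_small k_lt_n eps_gt0 eps_lt.
have value S : seed_set theta phi S ->
    payoff (subdiv_rel e) theta phi (d%:R - (k%:R - 1) / 2 + eps) 1 S =
    #|orig S|%:R * (eps - (k%:R - 1) / 2) + #|inside e (orig S)|%:R.
  move=> S_seed; rewrite (payoff_seed orig_acc subdiv_rej S_seed _ e_simple e_reg).
  by congr (_ * _ + _); ring.
split.
  case=> K [card_K K_clique].
  have K_seed : seed_set theta phi (inl @: K).
    by apply/forallP => j; apply/implyP => /imsetP [v _ ->].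
  exists (inl @: K); rewrite (card_seed subdiv_rej K_seed) value // orig_imset.
  split=> //; first by rewrite card_K.
  apply/(seed_value_gt0 k_gt0 _ (card_inside_le e_simple K) eps_gt0 k_eps).
    by rewrite card_K.
  by split=> //; exact/card_inside_clique.
case=> S [S_seed card_S]; rewrite (card_seed subdiv_rej S_seed) in card_S.
rewrite value //.
move=> /(seed_value_gt0 k_gt0 card_S (card_inside_le e_simple _) eps_gt0 k_eps).
case=> // card_orig orig_clique; exists (orig S); split=> //.
exact/(card_inside_clique e_simple).
Qed.
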